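(* Let $p$ be a prime, $q=p^m$, $1\le r<p$, and let $d(p,m,r)$ be as defined in the context. For every $f(x)\in\mathbb{F}_q[x]$ with $1\le\deg f\le r$, the number $N_f$ of rational places of the function field $E_f=\mathbb{F}_q(x,y)$, $y^p-y=f(x)$, satisfies $$N_f\le 1+p\,(q-d(p,m,r)).$$ Moreover, there exists a polynomial $h(x)\in\mathbb{F}_q[x]$ of degree at most $r$ such that $N_h=1+p\,(q-d(p,m,r))$.
   Context: Enumerate $\mathbb{F}_q^*=\{\alpha_1,\dots,\alpha_{q-1}\}$ and fix an $\mathbb{F}_p$-linear isomorphism $\mathbb{F}_q\cong\mathbb{F}_p^m$. Let $A\in\mathbb{F}_p^{rm\times(q-1)}$ be the matrix whose $j$-th column is the concatenation of the coordinate vectors of $\alpha_j,\alpha_j^2,\dots,\alpha_j^r$. Let $C\subseteq\mathbb{F}_p^{q-1}$ be the row space of $A$ over $\mathbb{F}_p$, and $d(p,m,r)$ the minimum Hamming distance of $C$ (independent of the choices, up to code equivalence). A rational place is a place of degree one; equivalently $N_f=1+p\cdot|\{\beta\in\mathbb{F}_q:\mathrm{Tr}_{\mathbb{F}_q/\mathbb{F}_p}(f(\beta))=0\}|$. *)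

From mathcomp Require Import all_boot all_order all_algebra all_field.
Set Implicit Arguments.
Unset Strict Implicit.
Unset Printing Implicit Defensive.
Import GRing.Theory.
Local Open Scope ring_scope.

Section Code.
Variables (p m r : nat) (F : finFieldType).

Definition trace (x : F) : F := \sum_(i < m) x ^+ (p ^ i).

(* number of rational places of y^p - y = f(x):
   N_f = 1 + p * #{ beta in F_q : Tr(f(beta)) = 0 } *)
Definition Nplaces (f : {poly F}) : nat :=
  (1 + p * #|[set b : F | trace f.[b] == 0%R]|)%N.

Definition Fstar : {set F} := [set x : F | x != 0].
Definition alpha (j : 'I_#|Fstar|) : F := enum_val j.

Variable phi : F -> 'rV['F_p]_m.  (* the F_p-linear isomorphism F_q ~ F_p^m *)

(* the matrix A: column j is the concatenation of the coordinate vectors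
   of alpha_j, alpha_j^2, ..., alpha_j^r *)
Definition Amat : 'M['F_p]_(\sum_(k < r) m, #|Fstar|) :=
  \mxcol_(k < r) (\matrix_(l < m, j < #|Fstar|) phi (alpha j ^+ k.+1) 0 l).

Definition in_code (c : 'rV['F_p]_#|Fstar|) : bool := (c <= Amat)%MS.

Definition hamming (c1 c2 : 'rV['F_p]_#|Fstar|) : nat :=
  #|[set j | c1 0 j != c2 0 j]|.

Definition dmin : nat :=
  \big[minn/#|Fstar|]_(c : 'rV['F_p]_#|Fstar| * 'rV['F_p]_#|Fstar|
      | [&& in_code c.1, in_code c.2 & c.1 != c.2]) hamming c.1 c.2.

End Code.

From HB Require Import structures.
From mathcomp Require Import all_boot all_order all_algebra all_field.
From mathcomp Require Import zify.
Set Implicit Arguments.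
Unset Strict Implicit.
Unset Printing Implicit Defensive.
Import GRing.Theory.
Local Open Scope ring_scope.

(* Let q = p^m = #|F|, write Tr for the absolute trace of F over F_p and      *)
(* alpha_1, ..., alpha_n (n = q - 1) for the nonzero elements of F.          *)
(* The proof identifies the code C with a trace code:                         *)
(*   C = { (Tr (g alpha_j))_j : g = a_1 x + ... + a_r x^r, a_k in F },        *)
(* read in F_p.  This rests on duality: every F_p-linear form on F_p^m,       *)
(* transported to F through phi, is x |-> Tr (a x) for a unique a in F        *)
(* (injectivity because Tr is not identically zero, surjectivity by counting).*)
(* For such a g the zeros of Tr o g are 0 together with the alpha_j where the *)
(* codeword vanishes, so #{b | Tr g(b) = 0} = q - weight.  Since 0 < deg g    *)
(* < p, Tr o g is not identically zero (a polynomial of degree <= deg g *     *)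
(* p^(m-1) < q cannot vanish on all of F), hence its codeword is nonzero and  *)
(* its weight is at least d.  A general f reduces to such a g by translating  *)
(* a zero t of Tr o f to 0 and subtracting f(t); conversely, a codeword of    *)
(* minimal weight d yields the polynomial h attaining the bound.              *)

Section PrimeSubfield.
Variables (p : nat) (F : finFieldType).
Hypothesis chF : p \in [pchar F].

Let p_prime : prime p. Proof. exact: pcharf_prime chF. Qed.

Definition embFp (k : 'F_p) : F := k%:R.

Lemma embFp_nat n : embFp n%:R = n%:R.
Proof.
rewrite /embFp val_Fp_nat //.
by rewrite [in RHS](divn_eq n p) natrD natrM (pcharf0 chF) mulr0 add0r.
Qed.

Lemma embFp_is_nmod_morphism : nmod_morphism embFp.
Proof.
split=> [//|x y].
by rewrite -[x]natr_Zp -[y]natr_Zp -natrD !embFp_nat natrD.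
Qed.

Lemma embFp_is_monoid_morphism : monoid_morphism embFp.
Proof.
split=> [|x y]; first exact: (embFp_nat 1).
by rewrite -[x]natr_Zp -[y]natr_Zp -natrM !embFp_nat natrM.
Qed.

HB.instance Definition _ :=
  GRing.isNmodMorphism.Build 'F_p F embFp embFp_is_nmod_morphism.
HB.instance Definition _ :=
  GRing.isMonoidMorphism.Build 'F_p F embFp embFp_is_monoid_morphism.

Lemma embFp_inj : injective embFp.
Proof. exact: fmorph_inj. Qed.

Lemma embFp_frob k : embFp k ^+ p = embFp k.
Proof.
rewrite -rmorphXn; congr embFp.
by rewrite -[X in _ ^+ X](card_Fp p_prime) expf_card.
Qed.

(* Conversely the Frobenius-fixed elements all lie in the prime subfield:   *)
(* otherwise 'X^p - 'X would have p + 1 distinct roots.                     *)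
Lemma frobenius_fixed_embFp t : t ^+ p = t -> exists k, embFp k = t.
Proof.
move=> tp; have [k /eqP|not_im] := pickP (fun k => embFp k == t).
  by exists k.
have sizeP : size ('X^p - 'X : {poly F}) = p.+1.
  by rewrite size_polyDl ?size_polyXn // size_polyN size_polyX ltnS prime_gt1.
have : (size (t :: [seq embFp k | k : 'F_p]) < size ('X^p - 'X : {poly F})%R)%N.
  apply: max_poly_roots; first by rewrite -size_poly_gt0 sizeP.
    apply/allP => x /predU1P[->|/mapP[k _ ->]].
      by rewrite /root !hornerE tp subrr.
    by rewrite /root !hornerE embFp_frob subrr.
  rewrite /= map_inj_uniq ?enum_uniq ?andbT; last exact: embFp_inj.
  by apply/mapP => -[k _ tk]; have := not_im k; rewrite /= tk eqxx.
by rewrite sizeP /= size_map -cardE card_Fp // ltnn.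
Qed.

End PrimeSubfield.

Section Trace.
Variables (p m : nat) (F : finFieldType).
Hypotheses (chF : p \in [pchar F]) (cardF : #|F| = (p ^ m)%N).

Let p_prime : prime p. Proof. exact: pcharf_prime chF. Qed.
Let m_gt0 : (0 < m)%N.
Proof. by rewrite lt0n; apply: contraTneq (finNzRing_gt1 F) => m0; rewrite cardF m0. Qed.
Local Notation tr := (@trace p m F).

Definition frobn i (x : F) : F := x ^+ (p ^ i).

Lemma frobn_is_nmod_morphism i : nmod_morphism (frobn i).
Proof.
split=> [|x y]; first by rewrite /frobn expr0n eqn0Ngt expn_gt0 prime_gt0.
by apply: exprDn_pchar; rewrite pnatX pnatE // chF.
Qed.

Lemma frobn_is_monoid_morphism i : monoid_morphism (frobn i).
Proof. by split=> [|x y]; rewrite /frobn ?expr1n ?exprMn. Qed.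

HB.instance Definition _ i :=
  GRing.isNmodMorphism.Build F F (frobn i) (frobn_is_nmod_morphism i).
HB.instance Definition _ i :=
  GRing.isMonoidMorphism.Build F F (frobn i) (frobn_is_monoid_morphism i).

Lemma frobnS i x : frobn 1 (frobn i x) = frobn i.+1 x.
Proof. by rewrite /frobn expn1 -exprM expnSr. Qed.

Lemma frobn_fixed i t : t ^+ p = t -> frobn i t = t.
Proof.
move=> tp; elim: i => [|i IH]; first by rewrite /frobn expr1.
by rewrite /frobn expnSr exprM -/(frobn i t) IH.
Qed.

Lemma traceE x : tr x = \sum_(i < m) frobn i x.
Proof. by []. Qed.

Lemma trace_is_nmod_morphism : nmod_morphism tr.
Proof.
split=> [|x y]; first by rewrite traceE big1 // => i _; rewrite rmorph0.
by rewrite !traceE -big_split; apply: eq_bigr => i _; rewrite rmorphD.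
Qed.

HB.instance Definition _ :=
  GRing.isNmodMorphism.Build F F tr trace_is_nmod_morphism.

(* The trace takes values in the prime subfield: Frobenius permutes the     *)
(* summands cyclically, since frobn m is the identity on F.                 *)
Lemma trace_frob x : tr x ^+ p = tr x.
Proof.
have -> : tr x ^+ p = frobn 1 (tr x) by rewrite /frobn expn1.
rewrite traceE rmorph_sum.
transitivity (\sum_(i < m) frobn i.+1 x).
  by apply: eq_bigr => i _; apply: frobnS.
have frobn_m : frobn m x = frobn 0 x by rewrite /frobn -cardF expf_card expr1.
have splitl : \sum_(i < m.+1) frobn i x = frobn 0 x + \sum_(i < m) frobn i.+1 x.
  exact: big_ord_recl.
have splitr : \sum_(i < m.+1) frobn i x = \sum_(i < m) frobn i x + frobn m x.
  exact: big_ord_recr.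
by apply: (@addrI _ (frobn 0 x)); rewrite -splitl splitr frobn_m addrC.
Qed.

Lemma traceZ t x : t ^+ p = t -> tr (t * x) = t * tr x.
Proof.
move=> tp; rewrite !traceE mulr_sumr; apply: eq_bigr => i _.
by rewrite rmorphM /= (frobn_fixed _ tp).
Qed.

Definition trace_poly (g : {poly F}) : {poly F} :=
  \sum_(i < m) (map_poly (frobn i) g \Po 'X^(p ^ i)).

Lemma horner_trace_poly (g : {poly F}) b : (trace_poly g).[b] = tr g.[b].
Proof.
rewrite horner_sum traceE; apply: eq_bigr => i _.
by rewrite horner_comp hornerXn -[b ^+ _]/(frobn i b) horner_map.
Qed.

(* When 0 < deg g < p, only the summand i = 0 of trace_poly g has a monomial *)
(* of degree deg g, all the others living in degrees divisible by p.         *)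
Lemma coef_trace_poly (g : {poly F}) : (0 < (size g).-1 < p)%N ->
  (trace_poly g)`_(size g).-1 = lead_coef g.
Proof.
move=> /andP[deg_gt0 deg_ltp].
rewrite coef_sum (bigD1 (Ordinal m_gt0)) //= big1 ?addr0 => [|i i_neq0].
  rewrite coef_comp_poly_Xn ?expn_gt0 ?prime_gt0 // expn0 dvd1n divn1.
  by rewrite coef_map /= /frobn expr1 lead_coefE.
rewrite coef_comp_poly_Xn ?expn_gt0 ?prime_gt0 //.
case: ifP => // /(dvdn_leq deg_gt0) pi_le_deg.
have i_gt0 : (0 < i)%N.
  by rewrite lt0n; apply: contraNneq i_neq0 => i0; apply/eqP/val_inj.
have p_le_pi : (p <= p ^ i)%N by rewrite -[X in (X <= _)%N]expn1 leq_exp2l ?prime_gt1.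
by have := leq_trans p_le_pi pi_le_deg; rewrite leqNgt deg_ltp.
Qed.

Lemma size_trace_poly (g : {poly F}) :
  (size (trace_poly g) <= ((size g).-1 * p ^ m.-1).+1)%N.
Proof.
apply: leq_trans (size_sum _ _ _) _; apply/bigmax_leqP => i _.
apply: leq_trans (size_comp_poly_leq _ _) _.
rewrite size_map_poly size_polyXn ltnS leq_mul // leq_exp2l ?prime_gt1 //.
by rewrite -ltnS prednK.
Qed.

(* For 0 < deg g < p, Tr o g does not vanish on all of F: trace_poly g is   *)
(* nonzero of degree at most deg g * p^(m-1) < q, so it has fewer than q    *)
(* roots.                                                                   *)
Lemma trace_poly_neq0 (g : {poly F}) :
  (0 < (size g).-1 < p)%N -> exists b, tr g.[b] != 0.
Proof.
move=> deg_g; have /andP[deg_gt0 deg_ltp] := deg_g.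
have [b|trg0] := pickP (fun b => tr g.[b] != 0); first by exists b.
have Q_neq0 : trace_poly g != 0.
  apply: contraTneq deg_gt0 => Q0; move: (coef_trace_poly deg_g).
  by rewrite Q0 coef0 => /esym/eqP; rewrite lead_coef_eq0 => /eqP->; rewrite size_poly0.
have all_roots : all (root (trace_poly g)) (enum F).
  by apply/allP => b _; rewrite /root horner_trace_poly; apply/negPn; rewrite trg0.
have := max_poly_roots Q_neq0 all_roots (enum_uniq F).
rewrite -cardE cardF => /leq_trans/(_ (size_trace_poly g)).
by rewrite -(prednK m_gt0) ltnS expnS leq_pmul2r ?expn_gt0 ?prime_gt0 // leqNgt deg_ltp.
Qed.

End Trace.

Section PrimeTrace.
Variables (p m : nat) (F : finFieldType).
Hypotheses (chF : p \in [pchar F]) (cardF : #|F| = (p ^ m)%N).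

Local Notation tr := (@trace p m F).
Local Notation emb := (@embFp p F).

Definition trFp (x : F) : 'F_p := odflt 0 [pick k | emb k == tr x].

Lemma trFpK x : emb (trFp x) = tr x.
Proof.
rewrite /trFp; case: pickP => [k /eqP // | not_im].
have [k tk] := frobenius_fixed_embFp chF (trace_frob chF cardF x).
by have := not_im k; rewrite /= tk eqxx.
Qed.

Lemma trFp_eq0 x : (trFp x == 0) = (tr x == 0).
Proof. by rewrite -trFpK fmorph_eq0. Qed.

Lemma trFp_is_nmod_morphism : nmod_morphism trFp.
Proof.
split=> [|x y]; apply: (@embFp_inj p F chF).
  by rewrite trFpK !raddf0.
by rewrite trFpK raddfD /= -!trFpK rmorphD.
Qed.

HB.instance Definition _ :=
  GRing.isNmodMorphism.Build F 'F_p trFp trFp_is_nmod_morphism.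

Lemma trFpZ k x : trFp (emb k * x) = k * trFp x.
Proof.
apply: (@embFp_inj p F chF).
by rewrite trFpK (traceZ m chF) ?embFp_frob // rmorphM /= trFpK.
Qed.

Lemma trace_neq0 : exists y, tr y != 0.
Proof.
have [|b trb] := @trace_poly_neq0 p m F chF cardF 'X.
  by rewrite size_polyX prime_gt1 ?(pcharf_prime chF).
by exists b; rewrite hornerX in trb.
Qed.

Lemma trFp_mul_inj a b : (forall x, trFp (a * x) = trFp (b * x)) -> a = b.
Proof.
move=> ab; apply/eqP; rewrite -subr_eq0; apply/negPn/negP => a_neq_b.
have [y try] := trace_neq0.
have := ab ((a - b)^-1 * y); move/eqP; rewrite -subr_eq0 -raddfB -mulrBl.
by rewrite mulrA mulfV // mul1r trFp_eq0 (negPf try).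
Qed.

End PrimeTrace.

Lemma additive_rowE (p m : nat) (F : finFieldType)
    (psi : {additive 'rV['F_p]_m -> F}) (v : 'rV['F_p]_m) :
  psi v = \sum_l embFp F (v 0 l) * psi 'e_l.
Proof.
rewrite {1}(row_sum_delta v) raddf_sum; apply: eq_bigr => l _.
by rewrite /embFp mulr_natl -raddfMn -scaler_nat natr_Zp.
Qed.

Section Duality.
Variables (p m : nat) (F : finFieldType).
Variables (phi : F -> 'rV['F_p]_m) (phiinv : 'rV['F_p]_m -> F).
Hypotheses (chF : p \in [pchar F]) (cardF : #|F| = (p ^ m)%N).
Hypotheses (phiD : {morph phi : x y / x + y}) (phiK : cancel phi phiinv)
  (phiinvK : cancel phiinv phi).

Lemma phiinv_is_nmod_morphism : nmod_morphism phiinv.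
Proof.
have phi0 : phi 0 = 0 by apply: (@addrI _ (phi 0)); rewrite -phiD !addr0.
by split=> [|u v]; apply: (can_inj phiK); rewrite ?phiD !phiinvK.
Qed.

HB.instance Definition _ :=
  GRing.isNmodMorphism.Build 'rV['F_p]_m F phiinv phiinv_is_nmod_morphism.

(* dual a is the coordinate vector of the linear form x |-> Tr (a x), read *)
(* through phi.                                                            *)
Definition dual (a : F) : 'rV['F_p]_m := \row_l trFp p m (a * phiinv 'e_l).

Lemma dualE a x : \sum_l phi x 0 l * dual a 0 l = trFp p m (a * x).
Proof.
rewrite -{2}[x]phiK (additive_rowE phiinv) mulr_sumr raddf_sum.
by apply: eq_bigr => l _; rewrite mxE /= mulrCA (trFpZ chF cardF).
Qed.

Lemma dual_inj : injective dual.
Proof.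
move=> a b ab; apply: (trFp_mul_inj chF cardF) => x.
by rewrite -!dualE ab.
Qed.

(* Every linear form on 'F_p^m is a trace form, as #|F| = #|'F_p^m|. *)
Lemma dual_onto u : exists a, dual a = u.
Proof.
have /codomP[a ->] : u \in codom dual.
  apply: (inj_card_onto dual_inj).
  by rewrite card_mx card_Fp ?(pcharf_prime chF) // mul1n cardF.
by exists a.
Qed.

End Duality.

Section MinimumDistance.
Variables (p : nat) (F : finFieldType) (k : nat) (M : 'M['F_p]_(k, #|Fstar F|)).
Local Notation n := #|Fstar F|.

(* min_distance (Amat r phi) by definition.                                *)
Definition code_pair (c : 'rV['F_p]_n * 'rV['F_p]_n) : bool :=
  [&& (c.1 <= M)%MS, (c.2 <= M)%MS & c.1 != c.2].

Definition min_distance : nat := \big[minn/n]_(c | code_pair c) hamming c.1 c.2.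

Lemma hamming_le (c1 c2 : 'rV['F_p]_n) : (hamming c1 c2 <= n)%N.
Proof. by rewrite /hamming (leq_trans (max_card _)) ?card_ord. Qed.

Lemma hammingE (c1 c2 : 'rV['F_p]_n) : hamming c1 c2 = hamming (c1 - c2) 0.
Proof. by apply: eq_card => j; rewrite !inE !mxE subr_eq0. Qed.

Lemma min_distance_le (c1 c2 : 'rV['F_p]_n) :
  (c1 <= M)%MS -> (c2 <= M)%MS -> c1 != c2 -> (min_distance <= hamming c1 c2)%N.
Proof.
move=> c1M c2M c12; rewrite /min_distance -minEnat.
have pair12 : code_pair (c1, c2) by rewrite /code_pair c1M c2M.
exact: (Order.TotalTheory.bigmin_le_cond n _ pair12).
Qed.

(* In a nonzero linear code the minimum distance is the weight of some     *)
(* nonzero codeword: the difference of a closest pair.                     *)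
Lemma min_distance_attained (c0 : 'rV['F_p]_n) : (c0 <= M)%MS -> c0 != 0 ->
  exists2 c, (c <= M)%MS && (c != 0) & hamming c 0 = min_distance.
Proof.
move=> c0M c0_neq0; have pair0 : code_pair (c0, 0) by rewrite /code_pair /= c0M sub0mx.
rewrite /min_distance -minEnat.
have [[c1 c2] /and3P[/= c1M c2M c12] ->] :=
  Order.TotalTheory.eq_bigmin _ _ (fun c => hamming c.1 c.2) pair0
    (fun c _ => hamming_le c.1 c.2).
exists (c1 - c2); last exact: esym (hammingE c1 c2).
by rewrite subr_eq0 c12 andbT addmx_sub // -scaleN1r scalemx_sub.
Qed.

End MinimumDistance.

Section TraceCode.
Variables (p m r : nat) (F : finFieldType).
Variables (phi : F -> 'rV['F_p]_m) (phiinv : 'rV['F_p]_m -> F).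
Hypotheses (chF : p \in [pchar F]) (cardF : #|F| = (p ^ m)%N).
Hypotheses (phiD : {morph phi : x y / x + y}) (phiK : cancel phi phiinv)
  (phiinvK : cancel phiinv phi).

Local Notation n := #|Fstar F|.
Local Notation tr := (@trace p m F).

Definition xpoly (a : 'I_r -> F) : {poly F} := \sum_(k < r) a k *: 'X^(k.+1).

Lemma xpolyE a x : (xpoly a).[x] = \sum_(k < r) a k * x ^+ k.+1.
Proof. by rewrite horner_sum; apply: eq_bigr => k _; rewrite hornerZ hornerXn. Qed.

Lemma xpoly0 a : (xpoly a).[0] = 0.
Proof. by rewrite xpolyE big1 // => k _; rewrite expr0n mulr0. Qed.

Lemma size_xpoly a : (size (xpoly a) <= r.+1)%N.
Proof.
apply: leq_trans (size_sum _ _ _) _; apply/bigmax_leqP => k _.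
by rewrite (leq_trans (size_scale_leq _ _)) // size_polyXn ltnS.
Qed.

Lemma xpoly_coefsE (g : {poly F}) x : g.[0] = 0 -> (size g <= r.+1)%N ->
  (xpoly (fun k => g`_k.+1)).[x] = g.[x].
Proof.
move=> g0 size_g; rewrite xpolyE (horner_coef_wide x size_g) big_ord_recl.
by rewrite -horner_coef0 g0 mul0r add0r.
Qed.

Definition trace_word (a : 'I_r -> F) : 'rV['F_p]_n :=
  \row_j trFp p m (xpoly a).[alpha j].

Lemma mxrow_dualE a : \mxrow_k dual phiinv (a k) *m Amat r phi = trace_word a.
Proof.
apply/rowP => j; rewrite /Amat mul_mxrow_mxcol summxE !mxE xpolyE raddf_sum.
apply: eq_bigr => k _; rewrite mxE /= -(dualE chF cardF phiD phiK phiinvK).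
by apply: eq_bigr => l _; rewrite !mxE mulrC.
Qed.

Lemma in_codeP c : in_code r phi c <-> exists a, c = trace_word a.
Proof.
split=> [/submxP[u ->] | [a ->]]; last by rewrite /in_code -mxrow_dualE submxMl.
have [a dual_a] :=
  fin_all_exists (fun k => dual_onto chF cardF phiD phiK phiinvK (submxrow u k)).
by exists a; rewrite -mxrow_dualE -[u]submxrowK (eq_mxrow dual_a).
Qed.

Lemma card_Fstar : n = #|F|.-1.
Proof. by rewrite -(cardsC1 (0 : F)); apply: eq_card => x; rewrite !inE. Qed.

Lemma trace_word_eq0 a j : (trace_word a 0 j == 0) = (tr (xpoly a).[alpha j] == 0).
Proof. by rewrite mxE (trFp_eq0 chF cardF). Qed.

(* The zeros of Tr o xpoly a are 0 and the alpha_j outside the support of *)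
(* its codeword.                                                           *)
Lemma card_trace_zeros a :
  #|[set b | tr (xpoly a).[b] == 0]| = (#|F| - hamming (trace_word a) 0)%N.
Proof.
set Z := [set b | tr (xpoly a).[b] == 0].
have Z0 : 0 \in Z by rewrite inE xpoly0 raddf0.
have Z_nz : Z :\ 0 = @alpha F @: [set j | trace_word a 0 j == 0].
  apply/setP => b; rewrite !inE; apply/andP/imsetP => [[b_nz Zb] | [j]].
    have bF : b \in Fstar F by rewrite inE.
    exists (enum_rank_in bF b); last by rewrite /alpha enum_rankK_in.
    by rewrite inE (trace_word_eq0 a (enum_rank_in bF b)) /alpha enum_rankK_in.
  rewrite inE trace_word_eq0 => Zj ->; split=> //.
  by have := enum_valP j; rewrite inE.
have weight : hamming (trace_word a) 0 = #|~: [set j | trace_word a 0 j == 0]|.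
  by apply: eq_card => j; rewrite !inE !mxE.
have split_n := cardsC [set j | trace_word a 0 j == 0].
rewrite -weight card_ord in split_n.
rewrite (cardsD1 0 Z) Z0 Z_nz card_imset; last exact: enum_val_inj.
have := hamming_le (trace_word a) 0; have := card_Fstar.
have : (0 < #|F|)%N by apply/card_gt0P; exists 0.
lia.
Qed.

(* A trace word is nonzero as soon as its trace function is not identically *)
(* zero, since that function vanishes at 0.                                 *)
Lemma trace_word_neq0 a b : tr (xpoly a).[b] != 0 -> trace_word a != 0.
Proof.
move=> trb; have bF : b \in Fstar F.
  by rewrite inE; apply: contraNneq trb => ->; rewrite xpoly0 raddf0.
apply/eqP => /rowP/(_ (enum_rank_in bF b)) /eqP.
by rewrite !mxE (trFp_eq0 chF cardF) /alpha enum_rankK_in // (negPf trb).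
Qed.

(* The bound for polynomials vanishing at 0: their trace word is a nonzero *)
(* codeword, hence of weight at least d.                                   *)
Lemma card_trace_zeros_le (g : {poly F}) : g.[0] = 0 ->
  (0 < (size g).-1 <= r)%N -> ((size g).-1 < p)%N ->
  (#|[set b | tr g.[b] == 0%R]| <= #|F| - dmin r phi)%N.
Proof.
move=> g0 /andP[deg_gt0 deg_le_r] deg_lt_p.
have size_g : (size g <= r.+1)%N by move: deg_le_r; case: (size g).
pose a k := g`_k.+1; have gE x := xpoly_coefsE x g0 size_g.
have [b trb] := trace_poly_neq0 chF cardF (introT andP (conj deg_gt0 deg_lt_p)).
have word_neq0 : trace_word a != 0 by apply: (trace_word_neq0 (b := b)); rewrite gE.
have word_in_code : in_code r phi (trace_word a) by apply/in_codeP; exists a.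
have := min_distance_le word_in_code (sub0mx _ _) word_neq0.
have zerosE : #|[set x | tr g.[x] == 0]| = #|[set x | tr (xpoly a).[x] == 0]|.
  by apply: eq_card => x; rewrite !inE gE.
by rewrite zerosE card_trace_zeros; apply: leq_sub2l.
Qed.

(* The bound is attained: C is nonzero (it contains the trace word of 'X), *)
(* and a codeword of minimal weight is the trace word of some xpoly a.     *)
Lemma dmin_attained : (0 < r)%N ->
  exists a, #|[set b | tr (xpoly a).[b] == 0]| = (#|F| - dmin r phi)%N.
Proof.
move=> r_gt0; pose a1 k := ('X : {poly F})`_k.+1.
have a1E x : (xpoly a1).[x] = x.
  by rewrite xpoly_coefsE ?hornerX // size_polyX ltnS.
have [y try] := trace_neq0 chF cardF.
have word_neq0 : trace_word a1 != 0 by apply: (trace_word_neq0 (b := y)); rewrite a1E.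
have word_in_code : in_code r phi (trace_word a1) by apply/in_codeP; exists a1.
have [c /andP[/in_codeP[a ->] _] weight] := min_distance_attained word_in_code word_neq0.
by exists a; rewrite card_trace_zeros weight.
Qed.

End TraceCode.

Definition shift_poly (R : comNzRingType) (f : {poly R}) (t : R) : {poly R} :=
  f \Po ('X + t%:P) - (f.[t])%:P.

Lemma horner_shift_poly (R : comNzRingType) (f : {poly R}) t b :
  (shift_poly f t).[b] = f.[b + t] - f.[t].
Proof. by rewrite !hornerE horner_comp !hornerE. Qed.

Lemma size_shift_poly (R : idomainType) (f : {poly R}) t :
  (1 < size f)%N -> size (shift_poly f t) = size f.
Proof.
move=> size_f; rewrite size_polyDl size_comp_poly2 ?size_XaddC //.
by rewrite size_polyN (leq_ltn_trans (size_polyC_leq1 _)).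
Qed.

Theorem theorem4p3 (p m r : nat) (F : finFieldType) (phi : F -> 'rV['F_p]_m) :
  prime p -> p \in [pchar F] -> #|F| = (p ^ m)%N ->
  (1 <= r)%N -> (r < p)%N ->
  {morph phi : x y / x + y} -> bijective phi ->
  (forall f : {poly F}, (1 <= (size f).-1 <= r)%N ->
     (Nplaces p m f <= 1 + p * (p ^ m - dmin r phi))%N) /\
  (exists h : {poly F}, ((size h).-1 <= r)%N /\
     Nplaces p m h = (1 + p * (p ^ m - dmin r phi))%N).
Proof.
move=> _ chF cardF r_gt0 r_lt_p phiD [phiinv phiK phiinvK]; split.
  move=> f deg_f; rewrite /Nplaces leq_add2l leq_mul2l -cardF; apply/orP; right.
  have [t /eqP trft | no_zero] := pickP (fun t => trace p m f.[t] == 0); last first.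
    by rewrite (eq_card0 (fun b => _)) // => b; rewrite inE no_zero.
  have size_f : (1 < size f)%N by case/andP: deg_f; case: (size f) => [|[]].
  pose g := shift_poly f t; have size_g : size g = size f by apply: size_shift_poly.
  have zerosE : #|[set b | trace p m f.[b] == 0]| = #|[set b | trace p m g.[b] == 0]|.
    rewrite -(card_preimset _ (addIr t)); apply: eq_card => b.
    by rewrite !inE horner_shift_poly raddfB /= trft subr0.
  rewrite zerosE (card_trace_zeros_le chF cardF phiD phiK phiinvK) ?size_g //.
    by rewrite horner_shift_poly add0r subrr.
  by case/andP: deg_f => _ /leq_ltn_trans; apply.
have [a zeros_a] := dmin_attained chF cardF phiD phiK phiinvK r_gt0.
exists (xpoly a); split; first by move: (size_xpoly a); case: (size _).
by rewrite /Nplaces zeros_a cardF.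
Qed.
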